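(* Let $p$ be a prime number which has Property C, and let $A$ be a sequence of length $4p-4$ over $(\mathbb{Z}/p\mathbb{Z})^2$ that does not contain any zero-sum subsequence of length $p$. Then either $A$ contains an element with multiplicity $p-1$, or all elements of $A$ have multiplicity at most $\frac{p}{2}$.
   Context: Sequences are finite, unordered, and may contain repeated elements; $a^{k}$ denotes $a$ repeated $k$ times, and the multiplicity of an element is the number of times it occurs. A zero-sum subsequence is a subsequence (selection of terms at distinct positions) whose terms sum to $0$. A prime $p$ has Property C if every sequence of length $3p-3$ in $(\mathbb{Z}/p\mathbb{Z})^2$ that does not contain a zero-sum subsequence of length $\le p$ is of the form $a^{p-1}b^{p-1}c^{p-1}$ for some elements $a,b,c$. *)

From HB Require Import structures.
From mathcomp Require Import all_boot all_order all_algebra.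
Set Implicit Arguments. Unset Strict Implicit. Unset Printing Implicit Defensive.
Import GRing.Theory.
Local Open Scope ring_scope.

Notation Zp2 p := ('Z_p * 'Z_p)%type.

(* A (finite, unordered) sequence is modelled by a list; a subsequence is a
   selection of distinct positions I. [s] has a zero-sum subsequence whose
   length satisfies [P]. *)
Definition has_zs_len (G : zmodType) (s : seq G) (P : nat -> bool) : Prop :=
  exists I : {set 'I_(size s)},
    P #|I| /\ \sum_(i in I) nth 0 s i = 0.

Definition PropertyC (p : nat) : Prop :=
  forall s : seq (Zp2 p),
    size s = (3 * p - 3)%N ->
    ~ has_zs_len s (fun k => (1 <= k <= p)%N) ->
    exists a b c : Zp2 p,
      perm_eq s (nseq (p - 1) a ++ nseq (p - 1) b ++ nseq (p - 1) c).

From mathcomp Require Import all_boot all_order all_algebra.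
From mathcomp Require Import zify.
Set Implicit Arguments. Unset Strict Implicit. Unset Printing Implicit Defensive.
Import GRing.Theory.
Local Open Scope ring_scope.

(* Let x have multiplicity m > p/2 in A with m <> p - 1; then m <= p - 2, as p
   copies of x sum to zero.  Subtract x from every term and discard the m zeros:
   a zero sum of length k <= p in the remaining family R of 4p - 4 - m nonzero
   terms could be padded with p - k copies of x into a zero sum of A of length p,
   so every short zero sum of R has length at most t = p - 1 - m, where
   1 <= t <= p/2 and |R| = 3p - 3 + t.
   Property C implies that any 3p - 2 terms contain a short zero sum and that
   3p - 3 terms without one take three values, each p - 1 times.  As two disjoint
   short zero sums of R merge into one of length at most 2t <= p, zero sums of R
   grow to length exactly t, the complement of such a zero sum U has the shape
   a^(p-1) b^(p-1) c^(p-1), and comparing multiplicities shows that U is the only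
   zero sum of length t.  Swapping a term u of U with a term of different value in
   the complement breaks that shape, so the new family has a short zero sum; grown
   to length t it is U, hence it is {u}, contradicting u <> 0. *)

Lemma Zp2_mulrn_char (p : nat) (v : Zp2 p) : (1 < p)%N -> v *+ p = 0.
Proof.
move=> p_gt1; rewrite pairMnE.
have Zp_char (a : 'Z_p) : a *+ p = 0 by rewrite -mulr_natr pchar_Zp // mulr0.
by rewrite !Zp_char.
Qed.

Lemma subset_of_card (T : finType) (S : {set T}) (k : nat) :
  (k <= #|S|)%N -> exists2 K : {set T}, K \subset S & #|K| = k.
Proof.
move=> /card_geqP[s [s_uniq <- s_sub]]; exists [set x in s].
  by apply/subsetP => x; rewrite inE; apply: s_sub.
by rewrite cardsE (card_uniqP s_uniq).
Qed.

Lemma count_mem_nth_set (T : eqType) (x0 x : T) (s : seq T) :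
  count_mem x s = #|[set i : 'I_(size s) | nth x0 s i == x]|.
Proof.
rewrite -{1}(mkseq_nth x0 s) /mkseq -val_enum_ord -map_comp count_map.
by rewrite -sum1_count -sum1_card big_enum_cond; apply: eq_bigl => i; rewrite inE.
Qed.

Lemma count_enum_set (T : finType) (S : {set T}) (P : pred T) :
  count P (enum S) = #|[set i in S | P i]|.
Proof.
by rewrite -sum1_count big_enum_cond -sum1_card; apply: eq_bigl => i; rewrite inE.
Qed.

Lemma has_zs_len_map_enum (G : zmodType) (T : finType) (f : T -> G)
    (S : {set T}) (P : pred nat) :
  has_zs_len [seq f i | i <- enum S] P ->
  exists2 K : {set T}, K \subset S & P #|K| && (\sum_(i in K) f i == 0).
Proof.
move=> [I [PI sumI]].
have e : size [seq f i | i <- enum S] = #|S| by rewrite size_map cardE.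
pose g i := enum_val (cast_ord e i).
have g_inj : injective g by move=> i j /enum_val_inj /cast_ord_inj.
exists (g @: I); first by apply/subsetP => _ /imsetP[i _ ->]; apply: enum_valP.
rewrite card_imset // PI big_imset /=; last by move=> i j _ _ /g_inj.
apply/eqP; rewrite -[RHS]sumI; apply: eq_bigr => i _.
by rewrite (nth_map (g i)) -?cardE -?e //; congr f; apply: enum_val_nth.
Qed.

Section ZeroSums.

Variables (p : nat) (T : finType) (y : T -> Zp2 p).
Hypothesis p_prime : prime p.
Implicit Types (S I K U V : {set T}) (v : Zp2 p).

Definition zero_sum K := \sum_(i in K) y i == 0.

Definition has_short_zs S :=
  [exists K in powerset S, (0 < #|K| <= p)%N && zero_sum K].

Definition multiplicity S v := #|[set i in S | y i == v]|.

Lemma has_short_zsP S :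
  reflect (exists2 K : {set T}, K \subset S & (0 < #|K| <= p)%N && zero_sum K)
          (has_short_zs S).
Proof.
apply: (iffP exists_inP) => -[K sKS hK]; exists K => //.
  by rewrite -powersetE.
by rewrite powersetE.
Qed.

Lemma has_short_zsS S1 S2 : S1 \subset S2 -> has_short_zs S1 -> has_short_zs S2.
Proof.
move=> sS12 /has_short_zsP[K sKS1 hK]; apply/has_short_zsP.
by exists K => //; apply: subset_trans sS12.
Qed.

Lemma multiplicity_le_card S v : (multiplicity S v <= #|S|)%N.
Proof. by apply: subset_leq_card; apply/subsetP => i; rewrite inE => /andP[]. Qed.

Lemma multiplicity_gt0 S k : k \in S -> (0 < multiplicity S (y k))%N.
Proof. by move=> kS; apply/card_gt0P; exists k; rewrite inE kS eqxx. Qed.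

Lemma multiplicityS S1 S2 v :
  S1 \subset S2 -> (multiplicity S1 v <= multiplicity S2 v)%N.
Proof.
move=> sS12; apply: subset_leq_card; apply/subsetP => i.
by rewrite !inE => /andP[/(subsetP sS12) -> ->].
Qed.

Lemma multiplicity_set1 k v : multiplicity [set k] v = (y k == v).
Proof.
rewrite /multiplicity -sum1_card; case: (eqVneq (y k) v) => [<-|neq].
  by rewrite (big_pred1 k) // => i; rewrite !inE andb_idr // => /eqP->.
by rewrite big_pred0 // => i; rewrite !inE; case: eqP => // ->; apply/negbTE.
Qed.

Lemma multiplicityD S V v : V \subset S ->
  (multiplicity (S :\: V) v + multiplicity V v)%N = multiplicity S v.
Proof.
move=> sVS; rewrite addnC /multiplicity -(cardsID V [set i in S | y i == v]).
congr (_ + _)%N; apply: eq_card => i; rewrite !inE.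
  by case iV: (i \in V); rewrite ?andbF ?andbT // (subsetP sVS).
by rewrite andbA.
Qed.

Lemma multiplicity_lt_card S v :
  (multiplicity S v < #|S|)%N -> exists2 k, k \in S & y k != v.
Proof.
move=> lt_card; apply/exists_inP; apply: contraTT lt_card => /exists_inP all_eq.
rewrite -leqNgt; apply: subset_leq_card; apply/subsetP => k kS.
by rewrite inE kS; apply: contraT => neq; case: all_eq; exists k.
Qed.

Lemma zero_sum_of_multiplicity S v : (p <= multiplicity S v)%N ->
  exists2 K : {set T}, K \subset S & (#|K| == p) && zero_sum K.
Proof.
move=> /subset_of_card[K sK cK]; exists K.
  by apply: subset_trans sK _; apply/subsetP => i; rewrite inE => /andP[].
rewrite cK eqxx /zero_sum (eq_bigr (fun=> v)); last first.
  by move=> i /(subsetP sK); rewrite inE => /andP[_ /eqP].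
by rewrite sumr_const cK Zp2_mulrn_char ?prime_gt1.
Qed.

Lemma multiplicity_lt_of_free S v : ~~ has_short_zs S -> (multiplicity S v < p)%N.
Proof.
move=> free; rewrite ltnNge; apply: contra free.
move=> /zero_sum_of_multiplicity[K sK /andP[/eqP cK zK]].
by apply/has_short_zsP; exists K => //; rewrite cK zK prime_gt0 ?leqnn.
Qed.

Lemma zero_sum0 : zero_sum set0.
Proof. by rewrite /zero_sum big_set0. Qed.

Lemma zero_sumU I K :
  [disjoint I & K] -> zero_sum I -> zero_sum K -> zero_sum (I :|: K).
Proof.
move=> dIK /eqP zI /eqP zK; rewrite /zero_sum (eq_bigl [predU I & K]) => [|i].
  by rewrite bigU //= zI zK addr0.
by rewrite !inE.
Qed.

Hypothesis propC : PropertyC p.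

Lemma free_multiplicity_dichotomy S v :
  #|S| = (3 * p - 3)%N -> ~~ has_short_zs S ->
  multiplicity S v = 0%N \/ multiplicity S v = (p - 1)%N.
Proof.
move=> cardS free.
have size_s : size [seq y i | i <- enum S] = (3 * p - 3)%N.
  by rewrite size_map -cardE.
have no_zs : ~ has_zs_len [seq y i | i <- enum S] (fun k => 1 <= k <= p)%N.
  by move=> /has_zs_len_map_enum[K sKS hK]; move/has_short_zsP: free; apply; exists K.
have [a [b [c /permP/(_ (pred1 v))]]] := propC size_s no_zs.
rewrite count_map count_enum_set !count_cat !count_nseq -/(multiplicity S v) /=.
have := multiplicity_lt_of_free v free.
by case: (a == v); case: (b == v); case: (c == v) => /=; lia.
Qed.

Hypothesis p_ge3 : (3 <= p)%N.

Lemma has_short_zs_large S : (3 * p - 2 <= #|S|)%N -> has_short_zs S.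
Proof.
move=> /subset_of_card[S' sS'S cardS']; apply: has_short_zsS sS'S _.
apply: contraT => free.
have [i iS'] : exists i, i \in S' by apply/card_gt0P; rewrite cardS'; lia.
have freeD1 k : ~~ has_short_zs (S' :\ k).
  by apply: contra free; apply: has_short_zsS; apply: subD1set.
have cardD1 k : k \in S' -> #|S' :\ k| = (3 * p - 3)%N.
  by move=> kS'; move: (cardsD1 k S'); rewrite kS' cardS'; lia.
have multD1 k : k \in S' ->
    (multiplicity (S' :\ k) (y i) + (y k == y i))%N = multiplicity S' (y i).
  by move=> kS'; rewrite -multiplicity_set1 multiplicityD // sub1set.
have [j jS' neq] : exists2 j, j \in S' & y j != y i.
  apply: multiplicity_lt_card; rewrite cardS'.
  by have := multiplicity_lt_of_free (y i) free; lia.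
have := free_multiplicity_dichotomy (y i) (cardD1 i iS') (freeD1 i).
have := free_multiplicity_dichotomy (y i) (cardD1 j jS') (freeD1 j).
have := multD1 i iS'; have := multD1 j jS'; rewrite eqxx (negbTE neq).
have := multiplicity_gt0 iS'; lia.
Qed.

Section BoundedShortZeroSums.

Variables (R : {set T}) (t : nat).
Hypothesis t_gt0 : (0 < t)%N.
Hypothesis t_le_half : (2 * t <= p)%N.
Hypothesis cardR : #|R| = (3 * p - 3 + t)%N.
Hypothesis y_neq0 : {in R, forall i, y i != 0}.
Hypothesis short_zs_le :
  forall I, I \subset R -> (0 < #|I| <= p)%N -> zero_sum I -> (#|I| <= t)%N.

Lemma zero_sum_setU_le I K :
  I \subset R -> zero_sum I -> (#|I| <= t)%N ->
  K \subset R :\: I -> (0 < #|K| <= p)%N -> zero_sum K ->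
  [/\ I :|: K \subset R, zero_sum (I :|: K), #|I :|: K| = (#|I| + #|K|)%N
    & (#|I| + #|K| <= t)%N].
Proof.
move=> sIR zI leIt; rewrite subsetD => /andP[sKR dKI] cardK zK.
have sIKR : I :|: K \subset R by rewrite subUset sIR.
have zIK : zero_sum (I :|: K) by rewrite zero_sumU // disjoint_sym.
have cardIK : #|I :|: K| = (#|I| + #|K|)%N.
  by rewrite cardsU disjoint_setI0 ?cards0 ?subn0 // disjoint_sym.
have leKt := short_zs_le sKR cardK zK.
split=> //; rewrite -cardIK; apply: short_zs_le => //.
by rewrite cardIK; lia.
Qed.

Lemma zero_sum_grow I : I \subset R -> zero_sum I -> (#|I| < t)%N ->
  exists J : {set T}, [/\ I \subset J, J \subset R, zero_sum J & (#|I| < #|J| <= t)%N].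
Proof.
move=> sIR zI ltIt.
have cardRI : #|R :\: I| = (#|R| - #|I|)%N by rewrite cardsD (setIidPr sIR).
have /has_short_zsP[K sKRI /andP[cardK zK]] : has_short_zs (R :\: I).
  by apply: has_short_zs_large; rewrite cardRI cardR; lia.
have [sIKR zIK cardIK leIKt] := zero_sum_setU_le sIR zI (ltnW ltIt) sKRI cardK zK.
by exists (I :|: K); split; rewrite ?subsetUl ?cardIK //; lia.
Qed.

Lemma zero_sum_extend I : I \subset R -> zero_sum I -> (#|I| <= t)%N ->
  exists J : {set T}, [/\ I \subset J, J \subset R, zero_sum J & #|J| = t].
Proof.
have [n] := ubnP (t - #|I|); elim: n I => // n IHn I lt_n sIR zI leIt.
have [ltIt | geIt] := ltnP #|I| t; last by exists I; split=> //; lia.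
have [J [sIJ sJR zJ /andP[ltIJ leJt]]] := zero_sum_grow sIR zI ltIt.
have [J' [sJJ' sJ'R zJ' cardJ']] := IHn J (ltac:(lia)) sJR zJ leJt.
by exists J'; split=> //; apply: subset_trans sJJ'.
Qed.

Lemma card_complement V : V \subset R -> #|V| = t -> #|R :\: V| = (3 * p - 3)%N.
Proof. by move=> sVR cardV; rewrite cardsD (setIidPr sVR) cardR cardV; lia. Qed.

Lemma complement_free V : V \subset R -> zero_sum V -> #|V| = t ->
  ~~ has_short_zs (R :\: V).
Proof.
move=> sVR zV cardV; apply/has_short_zsP => -[K sKRV /andP[cardK zK]].
have [_ _ _] := zero_sum_setU_le sVR zV (eq_leq cardV) sKRV cardK zK; lia.
Qed.

Lemma multiplicity_lt v : (multiplicity R v < p)%N.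
Proof.
rewrite ltnNge; apply/negP => /zero_sum_of_multiplicity[K sKR /andP[/eqP cardK zK]].
have := short_zs_le sKR; rewrite cardK zK prime_gt0 //= leqnn => /(_ isT); lia.
Qed.

Lemma complement_multiplicity V k : V \subset R -> zero_sum V -> #|V| = t ->
  k \in R :\: V -> multiplicity (R :\: V) (y k) = (p - 1)%N.
Proof.
move=> sVR zV cardV kRV; have := multiplicity_gt0 kRV.
by case: (free_multiplicity_dichotomy (y k) (card_complement sVR cardV)
  (complement_free sVR zV cardV)); lia.
Qed.

Lemma zero_sum_card_t_unique V V' :
  V \subset R -> zero_sum V -> #|V| = t ->
  V' \subset R -> zero_sum V' -> #|V'| = t -> V' = V.
Proof.
move=> sVR zV cardV sV'R zV' cardV'.
apply/eqP; rewrite eqEcard cardV cardV' leqnn andbT.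
apply/subsetP => k kV'; apply: contraT => kNV.
have kRV : k \in R :\: V by rewrite inE kNV (subsetP sV'R).
have multRV := complement_multiplicity sVR zV cardV kRV.
have := multiplicityS (y k) (subsetDl R V); have := multiplicity_lt (y k).
have := multiplicityD (y k) sV'R; have := multiplicity_gt0 kV'.
have := multiplicity_le_card V' (y k).
case: (free_multiplicity_dichotomy (y k) (card_complement sV'R cardV')
  (complement_free sV'R zV' cardV')); lia.
Qed.

Lemma swap_has_short_zs U u j : U \subset R -> zero_sum U -> #|U| = t ->
  u \in U -> j \in R :\: U -> y j != y u -> has_short_zs (u |: ((R :\: U) :\ j)).
Proof.
move=> sUR zU cardU uU jW neq; set W := R :\: U.
have uNWj : u \notin W :\ j by rewrite !inE uU andbF.
have cardW2 : #|u |: (W :\ j)| = (3 * p - 3)%N.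
  have := cardsD1 j W; rewrite jW card_complement // cardsU1 uNWj; lia.
have multW2 : multiplicity (u |: (W :\ j)) (y j) = multiplicity (W :\ j) (y j).
  have su : [set u] \subset u |: (W :\ j) by rewrite sub1set setU11.
  by rewrite -(multiplicityD (y j) su) setU1K // multiplicity_set1 eq_sym (negbTE neq) addn0.
have multWj : (multiplicity (W :\ j) (y j) + 1)%N = multiplicity W (y j).
  by rewrite -(multiplicityD (y j) (_ : [set j] \subset W)) ?sub1set // multiplicity_set1 eqxx.
apply: contraT => free; have := complement_multiplicity sUR zU cardU jW; rewrite -/W.
by case: (free_multiplicity_dichotomy (y j) cardW2 free); lia.
Qed.

Lemma bounded_short_zs_absurd : False.
Proof.
have [U [_ sUR zU cardU]] :=
  zero_sum_extend (sub0set R) zero_sum0 (ltac:(by rewrite cards0)).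
have [u uU] : exists u, u \in U by apply/card_gt0P; rewrite cardU.
have [j jW neq] : exists2 j, j \in R :\: U & y j != y u.
  apply: multiplicity_lt_card; rewrite card_complement //.
  by have := multiplicity_lt_of_free (y u) (complement_free sUR zU cardU); lia.
have /has_short_zsP[V sVW2 /andP[cardV zV]] :=
  swap_has_short_zs sUR zU cardU uU jW neq.
have sW2R : u |: ((R :\: U) :\ j) \subset R.
  by rewrite subUset sub1set (subsetP sUR) // (subset_trans (subD1set _ _) (subsetDl _ _)).
have sVR := subset_trans sVW2 sW2R.
have [V' [sVV' sV'R zV' cardV']] := zero_sum_extend sVR zV (short_zs_le sVR cardV zV).
have eqV'U := zero_sum_card_t_unique sUR zU cardU sV'R zV' cardV'.
have : V \subset [set u].
  apply/subsetP => k kV; have kU : k \in U by rewrite -eqV'U (subsetP sVV').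
  by have := subsetP sVW2 k kV; rewrite !inE kU /= andbF orbF.
rewrite subset1 => /orP[/eqP Vu | /eqP V0]; last by move: cardV; rewrite V0 cards0.
move: zV (y_neq0 (subsetP sUR u uU)).
by rewrite Vu /zero_sum big_set1 => /eqP->; rewrite eqxx.
Qed.

End BoundedShortZeroSums.
End ZeroSums.


Lemma shifted_zero_sum_card (p : nat) (A : seq (Zp2 p)) (x : Zp2 p)
    (I : {set 'I_(size A)}) :
  prime p -> ~ has_zs_len A (fun k => k == p) ->
  I \subset ~: [set i : 'I_(size A) | nth 0 A i == x] -> (#|I| <= p)%N ->
  \sum_(i in I) (nth 0 A i - x) = 0 -> (#|I| + count_mem x A < p)%N.
Proof.
move=> p_prime noA sIZ leIp zI; rewrite (count_mem_nth_set 0).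
set Z := [set i | _] in sIZ *; rewrite ltnNge; apply/negP => le_p.
have leJZ : (p - #|I| <= #|Z|)%N by rewrite leq_subLR.
have [J sJZ cardJ] := subset_of_card leJZ.
have dIJ : [disjoint I & J] by rewrite disjoints_subset (subset_trans sIZ) // setCS.
have cardIJ : (#|I| + #|J| = p)%N by lia.
apply: noA; exists (I :|: J); split.
  by rewrite cardsU disjoint_setI0 // cards0 subn0 cardIJ.
rewrite (eq_bigl [predU I & J]) => [|i]; last by rewrite !inE.
have sumI : \sum_(i in I) nth 0 A i = x *+ #|I|.
  by apply/eqP; rewrite -subr_eq0 -sumr_const -sumrB zI.
have sumJ : \sum_(i in J) nth 0 A i = x *+ #|J|.
  by rewrite -sumr_const; apply: eq_bigr => i /(subsetP sJZ); rewrite inE => /eqP.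
by rewrite bigU //= sumI sumJ -mulrnDr cardIJ Zp2_mulrn_char ?prime_gt1.
Qed.

Theorem lemma2p1 (p : nat) (A : seq (Zp2 p)) :
  prime p -> PropertyC p ->
  size A = (4 * p - 4)%N ->
  ~ has_zs_len A (fun k => k == p) ->
  (exists x, x \in A /\ count_mem x A = (p - 1)%N) \/
  (forall x, (2 * count_mem x A <= p)%N).
Proof.
move=> p_prime propC sizeA noA; have p_gt1 := prime_gt1 p_prime.
case: (boolP [exists x, (x \in A) && (count_mem x A == p - 1)%N]).
  by move=> /existsP[x /andP[xA /eqP multx]]; left; exists x.
move=> no_pred; right => x; rewrite leqNgt; apply/negP => half_lt_mult.
have := shifted_zero_sum_card (x := x) p_prime noA (sub0set _).
rewrite big_set0 cards0 add0n => /(_ (leq0n p) erefl) mult_lt_p.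
have mult_neq : count_mem x A != (p - 1)%N.
  apply: contra no_pred => /eqP m_eq; apply/existsP; exists x.
  by rewrite m_eq eqxx andbT -has_pred1 has_count m_eq; lia.
pose Z := [set i : 'I_(size A) | nth 0 A i == x].
have cardZ : #|Z| = count_mem x A by rewrite (count_mem_nth_set 0).
apply: (@bounded_short_zs_absurd p 'I_(size A) (fun i => nth 0 A i - x) p_prime propC _
  (~: Z) (p - 1 - count_mem x A)).
1-3: by move: mult_neq; lia.
- apply/eqP; rewrite -(eqn_add2l (count_mem x A)) -{1}cardZ cardsC card_ord sizeA.
  by apply/eqP; move: mult_neq; lia.
- by move=> i; rewrite !inE subr_eq0.
- move=> I sIZ /andP[_ leIp] /eqP zI.
  by have := shifted_zero_sum_card (x := x) p_prime noA sIZ leIp zI; lia.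
Qed.
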